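(* Let $G$ be an $n$-resource selection game. Then $h^s_j=h^{s'}_j$ for every $j\in[n]$ and every two Nash equilibria $s,s'$ of $G$.
   Context: Write $[n]=\{1,\ldots,n\}$ and $\mathbb{R}_{\ge}=[0,\infty)$. An $n$-resource selection game is a pair $G=\bigl((f_j)_{j=1}^n;(\mu^{R})_{\emptyset\ne R\subseteq[n]}\bigr)$ where each $f_j:\mathbb{R}_{\ge}\to\mathbb{R}$ is nondecreasing (not necessarily continuous) and $\mu^R\in\mathbb{R}_{\ge}$ for every nonempty $R\subseteq[n]$. A consumption profile is a map $s$ assigning to each nonempty $R\subseteq[n]$ a vector $s(R)\in\mathbb{R}_{\ge}^{[n]}$ with $s_j(R)=0$ for $j\notin R$ and $\sum_{j}s_j(R)=\mu^R$. The load of resource $j$ is $\mu^s_j=\sum_{R}s_j(R)$ and its cost is $h^s_j=f_j(\mu^s_j)$. $s$ is a Nash equilibrium if for every nonempty $R$, every $k$ with $s_k(R)>0$ and every $j\in R$, $h^s_k\le h^s_j$. *)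

(* Reals are modelled by an arbitrary real field R
   (the statement is order-algebraic; it then holds in particular for the reals). *)
From HB Require Import structures.
From mathcomp Require Import all_boot all_order all_algebra.
Set Implicit Arguments. Unset Strict Implicit. Unset Printing Implicit Defensive.
Import Order.TTheory GRing.Theory Num.Theory.
Local Open Scope ring_scope.

(* Resources are 'I_n (i.e. [n] shifted to {0,..,n-1}); a subset R of [n] is a {set 'I_n}. *)

Definition is_game (R : realFieldType) (n : nat)
    (f : 'I_n -> R -> R) (mu : {set 'I_n} -> R) : Prop :=
  (forall j x y, 0 <= x -> x <= y -> f j x <= f j y) /\
  (forall S : {set 'I_n}, S != set0 -> 0 <= mu S).

Definition is_profile (R : realFieldType) (n : nat)
    (mu : {set 'I_n} -> R) (s : {set 'I_n} -> 'I_n -> R) : Prop :=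
  forall S : {set 'I_n}, S != set0 ->
    (forall j, 0 <= s S j) /\
    (forall j, j \notin S -> s S j = 0) /\
    (\sum_(j < n) s S j = mu S).

Definition load (R : realFieldType) (n : nat)
    (s : {set 'I_n} -> 'I_n -> R) (j : 'I_n) : R :=
  \sum_(S : {set 'I_n} | S != set0) s S j.

Definition cost (R : realFieldType) (n : nat) (f : 'I_n -> R -> R)
    (s : {set 'I_n} -> 'I_n -> R) (j : 'I_n) : R :=
  f j (load s j).

Definition is_nash (R : realFieldType) (n : nat) (f : 'I_n -> R -> R)
    (mu : {set 'I_n} -> R) (s : {set 'I_n} -> 'I_n -> R) : Prop :=
  is_profile mu s /\
  forall (S : {set 'I_n}) (k j : 'I_n), S != set0 -> 0 < s S k -> j \in S ->
    cost f s k <= cost f s j.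

From HB Require Import structures.
From mathcomp Require Import all_boot all_order all_algebra.
Import Order.TTheory GRing.Theory Num.Theory.
Local Open Scope ring_scope.

(* Let A be the set of resources whose cost is strictly lower under s' than
   under s.  By monotonicity every resource of A carries strictly less load
   under s'.  On the other hand, a player group S that uses some resource of A
   under s can use only resources of A under s' (anything else would be
   cheaper for s than that resource), so S puts at least as much mass on A
   under s' as under s.  Summing over S contradicts the first fact unless A
   is empty. *)

Lemma load_ge0 {R : realFieldType} {n : nat} {mu : {set 'I_n} -> R}
    {s : {set 'I_n} -> 'I_n -> R} (j : 'I_n) :
  is_profile mu s -> 0 <= load s j.
Proof. by move=> ps; apply: sumr_ge0 => S /ps []. Qed.

Lemma profile_support {R : realFieldType} {n : nat} {mu : {set 'I_n} -> R}
    {s : {set 'I_n} -> 'I_n -> R} {S : {set 'I_n}} {j : 'I_n} :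
  is_profile mu s -> S != set0 -> 0 < s S j -> j \in S.
Proof.
by move=> ps /ps [_ [sout _]]; apply: contraTT => /sout ->; rewrite ltxx.
Qed.

Section CostComparison.

Context {R : realFieldType} {n : nat}.
Context {f : 'I_n -> R -> R} {mu : {set 'I_n} -> R}.
Context {s s' : {set 'I_n} -> 'I_n -> R}.
Hypotheses (game : is_game f mu) (nash : is_nash f mu s) (nash' : is_nash f mu s').

Let cheaper := [pred j : 'I_n | cost f s' j < cost f s j].

Lemma load_lt_of_cheaper (j : 'I_n) : cheaper j -> load s' j < load s j.
Proof.
rewrite inE /cost => lt_cost; rewrite ltNge; apply/negP => le_load.
have [fmon _] := game.
by move: lt_cost; rewrite ltNge fmon // (load_ge0 j nash.1).
Qed.

Lemma support_cheaper (S : {set 'I_n}) (k l : 'I_n) :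
  S != set0 -> cheaper k -> 0 < s S k -> 0 < s' S l -> cheaper l.
Proof.
move=> S0 k_cheaper sk_pos s'l_pos; rewrite inE ltNge; apply/negP => le_l.
have kS := profile_support nash.1 S0 sk_pos.
have lS := profile_support nash'.1 S0 s'l_pos.
have := lt_le_trans k_cheaper
  (le_trans (nash.2 S k l S0 sk_pos lS) (le_trans le_l (nash'.2 S l k S0 s'l_pos kS))).
by rewrite ltxx.
Qed.

Lemma cheaper_mass_le (S : {set 'I_n}) : S != set0 ->
  \sum_(j < n | cheaper j) s S j <= \sum_(j < n | cheaper j) s' S j.
Proof.
move=> S0; have [s_ge0 [_ s_sum]] := nash.1 S S0.
have [s'_ge0 [_ s'_sum]] := nash'.1 S S0.
have [[k /andP [k_cheaper sk_pos]] | no_mass] :=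
  altP (@existsP _ [pred k | cheaper k && (0 < s S k)]).
- have s'_out : forall l, ~~ cheaper l -> s' S l = 0.
    move=> l l_dear; apply/eqP; rewrite eq_le s'_ge0 andbT leNgt.
    by move: l_dear; apply: contraNN; exact: support_cheaper S0 k_cheaper sk_pos.
  have -> : \sum_(j < n | cheaper j) s' S j = mu S.
    by rewrite -s'_sum [RHS](bigID cheaper) /= [X in _ + X]big1 ?addr0.
  by rewrite -s_sum [X in _ <= X](bigID cheaper) /= lerDl sumr_ge0.
- rewrite big1 ?sumr_ge0 // => j j_cheaper.
  apply/eqP; rewrite eq_le s_ge0 andbT leNgt.
  by move: no_mass; apply: contraNN => sj_pos; apply/existsP; exists j; apply/andP.
Qed.

Lemma nash_cost_le (j : 'I_n) : cost f s j <= cost f s' j.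
Proof.
rewrite leNgt; apply/negP => j_cheaper.
have lt_load : \sum_(i < n | cheaper i) load s' i < \sum_(i < n | cheaper i) load s i.
  by apply: ltr_sum; [apply/hasP; exists j; rewrite ?mem_index_enum | exact: load_lt_of_cheaper].
have le_load : \sum_(i < n | cheaper i) load s i <= \sum_(i < n | cheaper i) load s' i.
  rewrite /load exchange_big [X in _ <= X]exchange_big /=.
  by apply: ler_sum => S; exact: cheaper_mass_le.
by have := lt_le_trans lt_load le_load; rewrite ltxx.
Qed.

End CostComparison.

Theorem mainTheorem2 (R : realFieldType) (n : nat)
    (f : 'I_n -> R -> R) (mu : {set 'I_n} -> R)
    (s s' : {set 'I_n} -> 'I_n -> R) :
  is_game f mu -> is_nash f mu s -> is_nash f mu s' ->
  forall j : 'I_n, cost f s j = cost f s' j.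
Proof.
move=> game nash nash' j; apply/eqP; rewrite eq_le.
by rewrite (nash_cost_le game nash nash') (nash_cost_le game nash' nash).
Qed.
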